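(* Let $P$ be a program. If one of the following holds: (a) every transaction of $P$ contains a single instruction, which is either a read or a write; (b) every transaction of $P$ contains only reads/writes that access a single shared variable (different transactions may access different variables); (c) there is a shared variable $x$ such that every transaction of $P$ contains a write to $x$; then $P$ is robust against snapshot isolation.
   Context: A program is a parallel composition of processes, each executing a sequence of transactions; a transaction is a sequence of instructions delimited by begin and commit, each instruction being a read $r:=x$ of a shared variable into a process-local register, a write $x:=e$ of a register expression into a shared variable, or $\mathtt{assume}(b)$ for a Boolean expression $b$ over registers. Under snapshot isolation (SI), when a transaction begins it takes a local snapshot of the central memory; its reads and writes access only this snapshot, and it can commit (copying its writes to the central memory) only if no transaction that committed after its begin wrote to a variable it writes to. Under serializability, transactions execute atomically. Traces abstract executions as issue and commit events of transactions together with the dependency relations program order, write-read, store order (write-write) and conflict (read-write). $P$ is robust against SI iff the set of traces of SI executions of $P$ equals the set of traces of serializable executions of $P$. *)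

From mathcomp Require Import all_boot.
Set Implicit Arguments. Unset Strict Implicit. Unset Printing Implicit Defensive.

Definition val := nat.
Definition var := nat.
Definition reg := nat.
Definition regfile := reg -> val.

(* register expressions / Boolean expressions over registers are arbitrary
   functions of the register valuation *)
Inductive instr :=
| IRead (r : reg) (x : var)
| IWrite (x : var) (e : regfile -> val)
| IAssume (b : regfile -> bool).

Definition transaction := seq instr.
Definition process := seq transaction.
Definition program := seq process.

(* transaction identifier: (process index, index of transaction in process) *)
Definition tid := (nat * nat)%type.

Inductive event := EvRead (x : var) (v : val) | EvWrite (x : var) (v : val).

(* a committed transaction, as recorded in the commit log *)
Record entry := Entry {
  ce_tid : tid;
  ce_events : seq event;
  ce_rf : seq (var * option tid);         (* non-local reads: variable and
                                             writer read from (None = initial) *)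
  ce_writes : seq (var * val) }.

Definition writes_var (e : entry) (x : var) : bool := x \in map fst (ce_writes e).

(* central memory obtained from a commit log (initial value 0) *)
Definition mem_of (log : seq entry) (x : var) : val :=
  foldl (fun v e => last v [seq p.2 | p <- ce_writes e & p.1 == x]) 0 log.

Definition last_writer (log : seq entry) (x : var) : option tid :=
  foldl (fun acc e => if writes_var e x then Some (ce_tid e) else acc) None log.

Definition upd_reg (rg : regfile) (r : reg) (v : val) : regfile :=
  fun r' => if r' == r then v else rg r'.

(* local execution of a transaction on a snapshot [snap] (whose last writers are
   given by [lw]); reads of variables already written by the transaction are
   local.  Returns None if an assume fails (the transaction blocks). *)
Fixpoint run (t : transaction) (rg : regfile) (snap : var -> val)
  (lw : var -> option tid) (ws : seq (var * val)) (evs : seq event)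
  (rf : seq (var * option tid))
  : option (regfile * seq (var * val) * seq event * seq (var * option tid)) :=
  match t with
  | [::] => Some (rg, ws, evs, rf)
  | IRead r x :: t' =>
      let loc := [seq p <- ws | p.1 == x] in
      let v := if loc is _ :: _ then (last (x, 0) loc).2 else snap x in
      let rf' := if loc is _ :: _ then rf else rcons rf (x, lw x) in
      run t' (upd_reg rg r v) snap lw ws (rcons evs (EvRead x v)) rf'
  | IWrite x e :: t' =>
      let v := e rg in
      run t' rg snap lw (rcons ws (x, v)) (rcons evs (EvWrite x v)) rf
  | IAssume b :: t' => if b rg then run t' rg snap lw ws evs rf else None
  end.

(* a running (begun, not yet committed) transaction *)
Record active := Active {
  act_start : nat;                 (* size of the commit log at begin *)
  act_regs : regfile;
  act_writes : seq (var * val);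
  act_events : seq event;
  act_rf : seq (var * option tid) }.

Record state := State {
  st_pc : nat -> nat;              (* index of the next transaction of process p *)
  st_regs : nat -> regfile;
  st_act : nat -> option active;
  st_log : seq entry }.

Definition init_state : state :=
  State (fun _ => 0) (fun _ _ => 0) (fun _ => None) [::].

Definition upd {A : Type} (f : nat -> A) (p : nat) (a : A) : nat -> A :=
  fun q => if q == p then a else f q.

Inductive label := LBegin (p : nat) | LCommit (p : nat).

Inductive step (P : program) : state -> label -> state -> Prop :=
| StepBegin s p rg ws evs rf :
    p < size P -> st_act s p = None ->
    st_pc s p < size (nth [::] P p) ->
    run (nth [::] (nth [::] P p) (st_pc s p)) (st_regs s p)
        (mem_of (st_log s)) (last_writer (st_log s)) [::] [::] [::]
      = Some (rg, ws, evs, rf) ->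
    step P s (LBegin p)
      (State (st_pc s) (st_regs s)
         (upd (st_act s) p (Some (Active (size (st_log s)) rg ws evs rf)))
         (st_log s))
| StepCommit s p a :
    st_act s p = Some a ->
    (* SI commit check: no transaction committed since the begin wrote a
       variable written by this transaction *)
    all (fun e => all (fun x => ~~ writes_var e x) (map fst (act_writes a)))
        (drop (act_start a) (st_log s)) ->
    step P s (LCommit p)
      (State (upd (st_pc s) p (st_pc s p).+1) (upd (st_regs s) p (act_regs a))
         (upd (st_act s) p None)
         (rcons (st_log s)
            (Entry (p, st_pc s p) (act_events a) (act_rf a) (act_writes a)))).

Inductive steps (P : program) : state -> seq label -> state -> Prop :=
| steps_nil s : steps P s [::] s
| steps_cons s l s' ls s'' :
    step P s l s' -> steps P s' ls s'' -> steps P s (l :: ls) s''.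

Definition si_exec (P : program) (ls : seq label) (s : state) : Prop :=
  steps P init_state ls s.

(* serializable executions: every transaction executes atomically *)
Definition ser_exec (P : program) (ls : seq label) (s : state) : Prop :=
  steps P init_state ls s /\
  exists ps : seq nat, ls = flatten [seq [:: LBegin p; LCommit p] | p <- ps].

Record trace := Trace {
  tr_com : tid -> bool;
  tr_ev : tid -> seq event;
  tr_po : tid -> tid -> bool;
  tr_wr : var -> tid -> tid -> bool;
  tr_ww : var -> tid -> tid -> bool;
  tr_rw : var -> tid -> tid -> bool }.

Definition find_entry (log : seq entry) (t : tid) : option entry :=
  ohead [seq e <- log | ce_tid e == t].
Definition pos_in (log : seq entry) (t : tid) : nat :=
  find (fun e => ce_tid e == t) log.
Definition committed (log : seq entry) (t : tid) : bool := t \in map ce_tid log.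
Definition wx (log : seq entry) (x : var) (t : tid) : bool :=
  if find_entry log t is Some e then writes_var e x else false.

Definition po_of (log : seq entry) (t1 t2 : tid) : bool :=
  [&& committed log t1, committed log t2, t1.1 == t2.1 & t1.2 < t2.2].
Definition wr_of (log : seq entry) (x : var) (t1 t2 : tid) : bool :=
  if find_entry log t2 is Some e then (x, Some t1) \in ce_rf e else false.
Definition ww_of (log : seq entry) (x : var) (t1 t2 : tid) : bool :=
  [&& wx log x t1, wx log x t2 & pos_in log t1 < pos_in log t2].
Definition rw_of (log : seq entry) (x : var) (t1 t2 : tid) : bool :=
  [&& t1 != t2, wx log x t2 &
      if find_entry log t1 is Some e then
        has (fun p => (p.1 == x) &&
                      (if p.2 is Some w then ww_of log x w t2 else true)) (ce_rf e)
      else false].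
Definition ev_of (log : seq entry) (t : tid) : seq event :=
  if find_entry log t is Some e then ce_events e else [::].

Definition trace_of (s : state) : trace :=
  let log := st_log s in
  Trace (committed log) (ev_of log) (po_of log) (wr_of log) (ww_of log) (rw_of log).

Definition Tr_SI (P : program) (T : trace) : Prop :=
  exists ls s, si_exec P ls s /\ trace_of s = T.
Definition Tr_SER (P : program) (T : trace) : Prop :=
  exists ls s, ser_exec P ls s /\ trace_of s = T.

Definition robust_SI (P : program) : Prop := forall T, Tr_SI P T <-> Tr_SER P T.

Definition all_tx (P : program) (Q : transaction -> Prop) : Prop :=
  forall p i, p < size P -> i < size (nth [::] P p) -> Q (nth [::] (nth [::] P p) i).

Definition single_rw_instr (t : transaction) : Prop :=
  match t with
  | [:: IRead _ _] | [:: IWrite _ _] => True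
  | _ => False
  end.

Definition instr_var (i : instr) : option var :=
  match i with IRead _ x | IWrite x _ => Some x | IAssume _ => None end.

Definition single_var_tx (t : transaction) : Prop :=
  exists x : var, all (fun i => if instr_var i is Some y then y == x else true) t.

Definition writes_to (x : var) (t : transaction) : Prop :=
  has (fun i => if i is IWrite y _ then y == x else false) t.

(* Given an SI execution, keep the transactions that write in commit order and
   move every read-only transaction back to the point where it took its
   snapshot.  A read-only transaction then sees exactly its SI snapshot, program
   order is preserved (a process begins a transaction only after committing the
   previous one), and the trace does not change, since it only depends on the
   events and reads-from of each transaction and on the commit order of the
   writers.  This order is a serial execution as soon as every writer would
   produce the same outcome on the state at its commit.  The SI commit check
   guarantees that no variable the writer writes changed since its snapshot:
   this suffices when a transaction accesses a single variable (a, b), and when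
   all transactions write a common variable it forces the snapshot to be the
   state at commit (c). *)

From mathcomp Require Import all_boot zify.
From Stdlib Require Import FunctionalExtensionality.

Set Implicit Arguments. Unset Strict Implicit. Unset Printing Implicit Defensive.

Lemma count_take_nth_lt (T : Type) (x0 : T) (a : pred T) s k :
  k < size s -> a (nth x0 s k) -> count a (take k s) < count a s.
Proof.
move=> Hk Ha; rewrite -[in X in _ < X](cat_take_drop k s) count_cat (drop_nth x0 Hk) /= Ha.
by rewrite addnS ltnS leq_addr.
Qed.

Lemma take_rcons_le (T : Type) (s : seq T) x k : k <= size s -> take k (rcons s x) = take k s.
Proof. by move=> Hk; rewrite -cats1 takel_cat. Qed.

Lemma foldl_filter (T A : Type) (f : A -> T -> A) (a : pred T) v s :
  (forall v x, ~~ a x -> f v x = v) -> foldl f v (filter a s) = foldl f v s.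
Proof. by move=> Hf; elim: s v => //= x s IH v; case: ifP => //= /negbT/Hf ->. Qed.

Lemma filter_fst_notin (T : Type) (ws : seq (var * T)) x :
  x \notin map fst ws -> [seq p <- ws | p.1 == x] = [::].
Proof.
elim: ws => [|[y v] ws IH] //=; rewrite in_cons negb_or => /andP[Hy Hx].
by rewrite eq_sym (negbTE Hy) IH.
Qed.

Lemma take_sorted_filter (T : eqType) (x0 : T) (r : rel T) s m :
  irreflexive r -> transitive r -> sorted r s -> m < size s ->
  take m s = filter (r ^~ (nth x0 s m)) s.
Proof.
move=> Hirr Htr Hs Hm; set x := nth x0 s m.
have Es : s = take m s ++ x :: drop m.+1 s by rewrite -drop_nth // cat_take_drop.
move: Hs; rewrite sorted_pairwise // {1}Es pairwise_cat => /and3P[Hlt _ /= /andP[Hgt _]].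
rewrite {2}Es filter_cat /= Hirr.
have -> : [seq y <- take m s | r y x] = take m s.
  by apply/all_filterP/allP => y Hy; move/allrelP: Hlt; apply; rewrite ?mem_head.
rewrite (@eq_in_filter _ _ pred0) ?filter_pred0 ?cats0 // => y /(allP Hgt) Hxy /=.
by apply/negP => /(Htr _ _ _ Hxy); rewrite Hirr.
Qed.

(** * Running transactions on snapshots *)

Definition written_vars (t : transaction) : seq var :=
  pmap (fun i => if i is IWrite x _ then Some x else None) t.

Lemma writes_to_written x t : writes_to x t -> x \in written_vars t.
Proof.
rewrite /writes_to; elim: t => [|[r y|y e|b] t IH] //=.
by rewrite in_cons eq_sym => /orP[->|/IH ->]; rewrite ?orbT.
Qed.

Lemma written_vars_accessed t : {subset written_vars t <= pmap instr_var t}.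
Proof.
move=> x; elim: t => [|[r y|y e|b] t IH] //=; rewrite ?in_cons //.
- by move/IH ->; rewrite orbT.
- by case/orP=> [->|/IH ->]; rewrite ?orbT.
Qed.

Lemma single_var_accessed t : single_var_tx t -> exists x, {subset pmap instr_var t <= pred1 x}.
Proof.
case=> x Ht; exists x => y; elim: t Ht => [|[r z|z e|b] t IH] //=.
- by case/andP=> /eqP -> /IH Ht; rewrite in_cons => /orP[|/Ht].
- by case/andP=> /eqP -> /IH Ht; rewrite in_cons => /orP[|/Ht].
Qed.

Lemma single_rw_instr_single_var t : single_rw_instr t -> single_var_tx t.
Proof. by case: t => [|[r x|x e|b] [|? ?]] //= _; exists x; rewrite /= eqxx. Qed.

Lemma run_writes t rg snap lw ws evs rf rg' ws' evs' rf' :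
  run t rg snap lw ws evs rf = Some (rg', ws', evs', rf') ->
  map fst ws' = map fst ws ++ written_vars t.
Proof.
elim: t rg ws evs rf => [|[r y|y e|b] t IH] rg ws evs rf /=.
- by case=> _ <- _ _; rewrite cats0.
- exact: IH.
- by move/IH ->; rewrite map_rcons cat_rcons.
- by case: (b rg) => // /IH.
Qed.

Lemma run_snapshot_eq t rg snap snap' lw lw' ws evs rf :
  {in pmap instr_var t, snap =1 snap'} -> {in pmap instr_var t, lw =1 lw'} ->
  run t rg snap lw ws evs rf = run t rg snap' lw' ws evs rf.
Proof.
elim: t rg ws evs rf => [|[r y|y e|b] t IH] rg ws evs rf //= Hs Hl.
- have Hy := mem_head y (pmap instr_var t).
  rewrite Hs ?Hl // IH // => x Hx; [apply: Hs | apply: Hl]; exact: mem_behead.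
- by rewrite IH // => x Hx; [apply: Hs | apply: Hl]; exact: mem_behead.
- by rewrite IH.
Qed.

Definition entry0 := Entry (0, 0) [::] [::] [::].
Definition txn (P : program) (t : tid) : transaction := nth [::] (nth [::] P t.1) t.2.
Definition of_proc (p : nat) (e : entry) : bool := (ce_tid e).1 == p.
Definition is_writer (e : entry) : bool := ce_writes e != [::].

Lemma mem_of_writes L1 L2 x :
  [seq e <- L1 | writes_var e x] = [seq e <- L2 | writes_var e x] ->
  mem_of L1 x = mem_of L2 x.
Proof.
have Hf L : mem_of [seq e <- L | writes_var e x] x = mem_of L x.
  by apply: foldl_filter => v e /filter_fst_notin ->.
by move=> E; rewrite -Hf E Hf.
Qed.

Lemma last_writer_writes L1 L2 x :
  [seq e <- L1 | writes_var e x] = [seq e <- L2 | writes_var e x] ->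
  last_writer L1 x = last_writer L2 x.
Proof.
have Hf L : last_writer [seq e <- L | writes_var e x] x = last_writer L x.
  by apply: foldl_filter => v e /negbTE ->.
by move=> E; rewrite -Hf E Hf.
Qed.

Lemma filter_writes_writers S x :
  [seq e <- filter is_writer S | writes_var e x] = [seq e <- S | writes_var e x].
Proof.
rewrite -filter_predI; apply: eq_filter => e /=.
by case Hx: (writes_var e x); rewrite //= /is_writer; move: Hx; rewrite /writes_var; case: (ce_writes e).
Qed.

Definition writes_none_of (S : seq entry) (xs : seq var) : bool :=
  all (fun e => all (fun x => ~~ writes_var e x) xs) S.

Lemma filter_writes_none S xs x : x \in xs -> writes_none_of S xs ->
  [seq e <- S | writes_var e x] = [::].
Proof.
move=> Hx; elim: S => //= e S IH /andP[He /IH ->].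
by rewrite (negbTE (allP He x Hx)).
Qed.

Definition upd_tid (R : tid -> regfile) (t : tid) (r : regfile) : tid -> regfile :=
  fun t' => if t' == t then r else R t'.

(* [R t] is the register file left by transaction [t]. *)
Definition regs_before (R : tid -> regfile) (t : tid) : regfile :=
  if t.2 is i.+1 then R (t.1, i) else fun _ => 0.

Lemma regs_before_upd_tid R t r t' : (t'.1 != t.1) || (t'.2 <= t.2) ->
  regs_before (upd_tid R t r) t' = regs_before R t'.
Proof.
case: t t' => p c [q [|i]] //= H; rewrite /regs_before /upd_tid /= xpair_eqE.
by case: eqP H => [->|] //= /ltn_eqF ->.
Qed.

Definition outcome_on P (R : tid -> regfile) (S : seq entry) (e : entry) : Prop :=
  run (txn P (ce_tid e)) (regs_before R (ce_tid e)) (mem_of S) (last_writer S) [::] [::] [::]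
  = Some (R (ce_tid e), ce_writes e, ce_events e, ce_rf e).

Lemma outcome_on_eq P R S1 S2 e :
  (forall x, x \in pmap instr_var (txn P (ce_tid e)) ->
     [seq e' <- S1 | writes_var e' x] = [seq e' <- S2 | writes_var e' x]) ->
  outcome_on P R S1 e -> outcome_on P R S2 e.
Proof.
move=> HS; rewrite /outcome_on => <-; apply: run_snapshot_eq => x /HS.
- by move/mem_of_writes.
- by move/last_writer_writes.
Qed.

Lemma outcome_on_writers P R S1 S2 e :
  filter is_writer S1 = filter is_writer S2 -> outcome_on P R S1 e -> outcome_on P R S2 e.
Proof.
move=> HS; apply: outcome_on_eq => x _.
by rewrite -(filter_writes_writers S1) -(filter_writes_writers S2) HS.
Qed.

(** * SI executions *)

(* [B k] is the length of the log when the [k]-th committed transaction began,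
   i.e. its snapshot is [take (B k) L]; the last clause is the SI commit check. *)
Variant si_entry P R (L : seq entry) (B : nat -> nat) (k : nat) (e : entry) : Prop :=
  SiEntry of (ce_tid e).1 < size P
   & (ce_tid e).2 < size (nth [::] P (ce_tid e).1)
   & (ce_tid e).2 = count (of_proc (ce_tid e).1) (take k L)
   & B k <= k
   & (forall j, j < k -> of_proc (ce_tid e).1 (nth entry0 L j) -> j < B k)
   & outcome_on P R (take (B k) L) e
   & writes_none_of (drop (B k) (take k L)) (map fst (ce_writes e)).

Definition si_log P R L B := forall k, k < size L -> si_entry P R L B k (nth entry0 L k).

Variant active_ok P (L : seq entry) (p i : nat) (rg : regfile) (a : active) : Prop :=
  ActiveOk of p < size P & i < size (nth [::] P p) & act_start a <= size L
   & (forall j, j < size L -> of_proc p (nth entry0 L j) -> j < act_start a)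
   & run (txn P (p, i)) rg (mem_of (take (act_start a) L))
       (last_writer (take (act_start a) L)) [::] [::] [::]
     = Some (act_regs a, act_writes a, act_events a, act_rf a).

Definition procs_follow_log R s := forall p,
  st_pc s p = count (of_proc p) (st_log s) /\ st_regs s p = regs_before R (p, st_pc s p).

Record si_state P R B s : Prop := SiState {
  si_state_log : si_log P R (st_log s) B;
  si_state_procs : procs_follow_log R s;
  si_state_act : forall p a, st_act s p = Some a ->
    active_ok P (st_log s) p (st_pc s p) (st_regs s p) a }.

Lemma si_log_pc_lt P R L B k : si_log P R L B -> k < size L ->
  (ce_tid (nth entry0 L k)).2 < count (of_proc (ce_tid (nth entry0 L k)).1) L.
Proof.
move=> HL Hk; have [_ _ -> _ _ _ _] := HL k Hk.
by apply: count_take_nth_lt => //; rewrite /of_proc.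
Qed.

Lemma si_entry_rcons P R R' L B B' e' k e :
  k < size L -> B' k = B k -> R' (ce_tid e) = R (ce_tid e) ->
  regs_before R' (ce_tid e) = regs_before R (ce_tid e) ->
  si_entry P R L B k e -> si_entry P R' (rcons L e') B' k e.
Proof.
move=> Hk EB ER ER' [H1 H2 H3 H4 H5 H6 H7].
have Tk : take k (rcons L e') = take k L by rewrite take_rcons_le // ltnW.
have TB : take (B k) (rcons L e') = take (B k) L.
  by rewrite take_rcons_le // (leq_trans H4 (ltnW Hk)).
split; rewrite ?EB ?Tk ?TB //.
- by move=> j Hj; rewrite nth_rcons (ltn_trans Hj Hk); apply: H5.
- by rewrite /outcome_on ER ER'.
Qed.

Lemma si_log_commit P R L B p c rg a :
  si_log P R L B -> c = count (of_proc p) L -> active_ok P L p c rg a ->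
  rg = regs_before R (p, c) -> writes_none_of (drop (act_start a) L) (map fst (act_writes a)) ->
  si_log P (upd_tid R (p, c) (act_regs a))
    (rcons L (Entry (p, c) (act_events a) (act_rf a) (act_writes a)))
    (upd B (size L) (act_start a)).
Proof.
move=> HL Ec [HP Hc Hst Hbefore Hrun] Erg Hchk k.
rewrite size_rcons ltnS leq_eqVlt nth_rcons => /orP[/eqP ->|Hk].
  rewrite ltnn /upd eqxx.
  split; rewrite /= ?eqxx ?take_rcons_le ?take_size -?Ec //.
  - by move=> j Hj; rewrite nth_rcons Hj; apply: Hbefore.
  - rewrite /outcome_on /= /upd_tid eqxx.
    by rewrite regs_before_upd_tid ?leqnn ?orbT // -Erg -Hrun.
rewrite Hk; have := si_log_pc_lt HL Hk.
case Et: (ce_tid (nth entry0 L k)) => [q i] /= Hi.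
have Hqi : (q != p) || (i < c) by case: eqP Hi => //= ->; rewrite Ec.
apply: (si_entry_rcons (R := R) (B := B)); rewrite ?Et //.
- by rewrite /upd ltn_eqF.
- by rewrite /upd_tid xpair_eqE; case: eqP Hqi => //= _ /ltn_eqF ->.
- by rewrite regs_before_upd_tid //; case/orP: Hqi => [->|/ltnW ->]; rewrite ?orbT.
- exact: HL.
Qed.

Lemma procs_follow_log_commit {act} R R' s p e r :
  procs_follow_log R s -> ce_tid e = (p, st_pc s p) -> R' (p, st_pc s p) = r ->
  (forall t, t.1 != p -> R' t = R t) ->
  procs_follow_log R' (State (upd (st_pc s) p (st_pc s p).+1) (upd (st_regs s) p r) act
                     (rcons (st_log s) e)).
Proof.
move=> HR Et Er HR' q; have [Hpc Hrg] := HR q.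
have -> : count (of_proc q) (rcons (st_log s) e) = count (of_proc q) (st_log s) + (p == q).
  by rewrite -cats1 count_cat /= {2}/of_proc Et /= addn0.
rewrite /upd /= -Hpc; case: (q =P p) => [->|/eqP Hq]; first by rewrite eqxx addn1 -Er.
rewrite eq_sym (negbTE Hq) addn0 Hrg; split=> //.
by case: (st_pc s q) => // i; rewrite /regs_before /= HR'.
Qed.

Lemma active_ok_rcons P L p i rg a e :
  ~~ of_proc p e -> active_ok P L p i rg a -> active_ok P (rcons L e) p i rg a.
Proof.
move=> He [H1 H2 H3 H4 H5]; split; rewrite ?take_rcons_le ?size_rcons ?(leqW H3) //.
move=> j; rewrite ltnS leq_eqVlt nth_rcons => /orP[/eqP ->|Hj]; last by rewrite Hj; apply: H4.
by rewrite ltnn eqxx (negbTE He).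
Qed.

Lemma si_state_init P : si_state P (fun _ _ => 0) (fun _ => 0) init_state.
Proof. by split. Qed.

Lemma si_state_step P R B s0 l s' : si_state P R B s0 -> step P s0 l s' ->
  exists R' B', si_state P R' B' s'.
Proof.
move=> Hs Hst; case: Hst Hs => {s'} [s p rg ws evs rf Hp _ Hpc Hrun|s p a Ha Hchk] [HL HR HA].
  exists R, B; split=> // q a' /=; rewrite /upd; case: (q =P p) => [->|_]; last exact: HA.
  by case=> <-; split; rewrite //= take_size.
have [Hpc Hrg] := HR p; have Hact := HA p a Ha.
set c := st_pc s p in Hpc Hrg Hact *.
exists (upd_tid R (p, c) (act_regs a)), (upd B (size (st_log s)) (act_start a)); split.
- exact: (si_log_commit HL Hpc Hact Hrg Hchk).
- apply: procs_follow_log_commit => //; first by rewrite /upd_tid eqxx.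
  by move=> [q i] /= Hq; rewrite /upd_tid xpair_eqE (negbTE Hq).
- move=> q a' /=; rewrite /upd; case: (q =P p) => // /eqP Hq Ha'.
  by apply: active_ok_rcons (HA q a' Ha'); rewrite /of_proc eq_sym.
Qed.

Lemma si_state_steps P R B s ls s' : si_state P R B s -> steps P s ls s' ->
  exists R' B', si_state P R' B' s'.
Proof.
move=> Hs Hsteps; elim: Hsteps R B Hs => [s1|s1 l s2 ls' s3 Hst _ IH] R B Hs1.
  by exists R, B.
by have [R' [B' Hs2]] := si_state_step Hs1 Hst; apply: IH Hs2.
Qed.

Lemma si_log_snapshot_le P R L B k : si_log P R L B -> k < size L -> B k <= k.
Proof. by move=> HL /HL []. Qed.

Lemma si_log_snapshot_proc P R L B j k : si_log P R L B -> j < k -> k < size L ->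
  of_proc (ce_tid (nth entry0 L k)).1 (nth entry0 L j) -> j < B k.
Proof. by move=> HL Hjk /HL [_ _ _ _ H5 _ _]; apply: H5. Qed.

Lemma si_log_written P R L B k : si_log P R L B -> k < size L ->
  map fst (ce_writes (nth entry0 L k)) = written_vars (txn P (ce_tid (nth entry0 L k))).
Proof. by move=> HL /HL [_ _ _ _ _ /run_writes -> _]. Qed.

Lemma si_log_uniq_tids P R L B : si_log P R L B -> uniq (map ce_tid L).
Proof.
move=> HL; apply/(uniqPn (0, 0)) => -[i [j [Hij]]]; rewrite size_map => Hj.
have Hi := ltn_trans Hij Hj; rewrite !(nth_map entry0) // => Et.
have [_ _ Ei _ _ _ _] := HL i Hi; have [_ _ Ej _ _ _ _] := HL j Hj.
set p := (ce_tid (nth entry0 L j)).1 in Ej.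
have Hlt : count (of_proc p) (take i (take j L)) < count (of_proc p) (take j L).
  apply: (count_take_nth_lt (x0 := entry0)); first by rewrite size_takel // ltnW.
  by rewrite nth_take // /of_proc Et.
rewrite take_takel ?(ltnW Hij) // -Ej in Hlt; rewrite Et -/p in Ei.
by rewrite -Ei ltnn in Hlt.
Qed.

(** * Serial executions *)

Lemma steps_cat P s ls1 s1 ls2 s2 :
  steps P s ls1 s1 -> steps P s1 ls2 s2 -> steps P s (ls1 ++ ls2) s2.
Proof. by elim=> // s0 l s' ls s'' Hst _ IH /IH; apply: steps_cons. Qed.

Definition serial_labels (ps : seq nat) : seq label :=
  flatten [seq [:: LBegin p; LCommit p] | p <- ps].

Lemma serial_step P R L n s :
  si_log P R L id -> n < size L -> st_log s = take n L -> procs_follow_log R s ->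
  (forall q, st_act s q = None) ->
  exists p s', [/\ steps P s [:: LBegin p; LCommit p] s', st_log s' = take n.+1 L,
                   procs_follow_log R s' & forall q, st_act s' q = None].
Proof.
move=> HL Hn Hlog HR Hidle; rewrite (take_nth entry0 Hn) -Hlog.
have := HL n Hn.
case: (nth entry0 L n) => [[p i] evs rf ws] [/= HP Hi Hcount _ _ Hout _].
have [Hpc Hrg] := HR p; rewrite -Hlog -Hpc in Hcount; subst i.
rewrite /outcome_on /= -Hlog -Hrg in Hout.
pose a := Active (size (st_log s)) (R (p, st_pc s p)) ws evs rf.
set s1 := State (st_pc s) (st_regs s) (upd (st_act s) p (Some a)) (st_log s).
have Hbegin : step P s (LBegin p) s1.
  by apply: StepBegin; [exact: HP | exact: Hidle | exact: Hi | exact: Hout].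
have Ha : st_act s1 p = Some a by rewrite /= /upd eqxx.
have Hfresh : writes_none_of (drop (act_start a) (st_log s1)) (map fst (act_writes a)).
  by rewrite /= drop_size.
exists p; eexists; split.
- exact: steps_cons Hbegin (steps_cons (StepCommit P Ha Hfresh) (steps_nil _ _)).
- done.
- by apply: (procs_follow_log_commit (R' := R) HR).
- by move=> q /=; rewrite /upd; case: eqP => // _; rewrite Hidle.
Qed.

Lemma serial_exec_of_log P R L : si_log P R L id ->
  exists ls s, ser_exec P ls s /\ st_log s = L.
Proof.
move=> HL.
have Hprefix n : n <= size L -> exists ps s,
    [/\ steps P init_state (serial_labels ps) s, st_log s = take n L,
        procs_follow_log R s & forall q, st_act s q = None].
  elim: n => [|n IH] Hn; first by exists [::], init_state; rewrite take0; split=> //; constructor.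
  have [ps [s [Hsteps Hlog HR Hidle]]] := IH (ltnW Hn).
  have [p [s' [Hst Hlog' HR' Hidle']]] := serial_step HL Hn Hlog HR Hidle.
  exists (rcons ps p), s'; split=> //.
  by rewrite /serial_labels map_rcons flatten_rcons; apply: steps_cat Hst.
have [ps [s [Hsteps Hlog _ _]]] := Hprefix _ (leqnn (size L)).
by exists (serial_labels ps), s; rewrite Hlog take_size; split=> //; split=> //; exists ps.
Qed.

(** * The serialization order *)

Section Serialization.

Variables (L : seq entry) (B : nat -> nat).

Definition serial_point k := if is_writer (nth entry0 L k) then k else B k.

(* Writers keep their commit order; a read-only transaction moves back to its
   snapshot, between the writers committed before and after it began. *)
Definition sched_key j := if is_writer (nth entry0 L j) then (2 * j).+1 else 2 * B j.

(* The order in which [sort_stable] leaves [schedule] sorted. *)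
Definition sched_lt : rel nat :=
  [rel j k | (sched_key j <= sched_key k) && ((sched_key k <= sched_key j) ==> (j < k))].

Definition schedule := sort (relpre sched_key leq) (iota 0 (size L)).

Definition serialize := map (nth entry0 L) schedule.

Lemma sched_lt_irr : irreflexive sched_lt.
Proof. by move=> j; rewrite /sched_lt /= leqnn ltnn. Qed.

Lemma sched_lt_trans : transitive sched_lt.
Proof.
move=> k j l; rewrite /sched_lt /= => /andP[H1 /implyP H2] /andP[H3 /implyP H4].
by rewrite (leq_trans H1 H3); apply/implyP => H5; apply: ltn_trans (H2 _) (H4 _); lia.
Qed.

Lemma perm_schedule : perm_eq schedule (iota 0 (size L)).
Proof. by rewrite perm_sort. Qed.

Lemma size_schedule : size schedule = size L.
Proof. by rewrite size_sort size_iota. Qed.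

Lemma schedule_sorted : sorted sched_lt schedule.
Proof.
apply: sort_stable; [by move=> j k; apply: leq_total | exact: ltn_trans | exact: iota_ltn_sorted].
Qed.

Lemma mem_schedule j : (j \in schedule) = (j < size L).
Proof. by rewrite (perm_mem perm_schedule) mem_iota. Qed.

Lemma nth_schedule_lt m : m < size L -> nth 0 schedule m < size L.
Proof. by move=> Hm; rewrite -mem_schedule mem_nth // size_schedule. Qed.

Lemma take_schedule m : m < size L ->
  take m schedule = filter (sched_lt ^~ (nth 0 schedule m)) schedule.
Proof.
move=> Hm; apply: take_sorted_filter; rewrite ?size_schedule //.
- exact: sched_lt_irr.
- exact: sched_lt_trans.
- exact: schedule_sorted.
Qed.

Lemma sched_lt_writer j k : is_writer (nth entry0 L j) -> sched_lt j k = (j < serial_point k).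
Proof.
rewrite /sched_lt /sched_key /serial_point /= => ->.
by case: (is_writer _); apply/idP/idP; lia.
Qed.

Lemma writers_schedule :
  [seq j <- schedule | is_writer (nth entry0 L j)] =
  [seq j <- iota 0 (size L) | is_writer (nth entry0 L j)].
Proof.
apply: (irr_sorted_eq ltn_trans ltnn).
- apply: (sub_in_sorted (P := [pred j | is_writer (nth entry0 L j)]) (e := sched_lt)).
  + by move=> j k; rewrite !inE => Hj Hk; rewrite sched_lt_writer // /serial_point Hk.
  + exact: filter_all.
  + by apply: sorted_filter; [exact: sched_lt_trans | exact: schedule_sorted].
- by apply: sorted_filter; [exact: ltn_trans | exact: iota_ltn_sorted].
- by move=> j; rewrite !mem_filter (perm_mem perm_schedule).
Qed.

Lemma writers_serialize : filter is_writer serialize = filter is_writer L.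
Proof. by rewrite filter_map writers_schedule -filter_map map_nth_iota0 // take_size. Qed.

Lemma nth_serialize m : m < size L -> nth entry0 serialize m = nth entry0 L (nth 0 schedule m).
Proof. by move=> Hm; rewrite (nth_map 0) // size_schedule. Qed.

Lemma take_serialize m : m < size L ->
  take m serialize = map (nth entry0 L) (filter (sched_lt ^~ (nth 0 schedule m)) schedule).
Proof. by move=> Hm; rewrite -map_take take_schedule. Qed.

Hypothesis B_le : forall k, k < size L -> B k <= k.

Lemma writers_serialize_prefix m : m < size L ->
  filter is_writer (take m serialize) =
  filter is_writer (take (serial_point (nth 0 schedule m)) L).
Proof.
move=> Hm; set k := nth 0 schedule m.
have Hk : k < size L by apply: nth_schedule_lt.
have Hpt : serial_point k <= size L.
  by rewrite /serial_point; case: (is_writer _); [exact: ltnW | exact: leq_trans (B_le Hk) (ltnW Hk)].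
rewrite take_serialize // filter_map -filter_predI.
rewrite (@eq_filter _ _ (predI (gtn (serial_point k)) (preim (nth entry0 L) is_writer))); last first.
  by move=> j /=; case Hw: (is_writer _); rewrite ?andbF ?andbT // sched_lt_writer.
rewrite filter_predI writers_schedule -filter_predI.
rewrite (@eq_filter _ _ (predI (preim (nth entry0 L) is_writer) (gtn (serial_point k)))); last first.
  by move=> j /=; rewrite andbC.
rewrite filter_predI (_ : filter (gtn (serial_point k)) (iota 0 (size L)) = iota 0 (serial_point k)).
  by rewrite -filter_map map_nth_iota0.
exact: (filter_iota_ltn 0 Hpt).
Qed.

Hypothesis B_proc : forall j k, j < k -> k < size L ->
  of_proc (ce_tid (nth entry0 L k)).1 (nth entry0 L j) -> j < B k.

Lemma sched_lt_proc j k : j < size L -> k < size L ->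
  (ce_tid (nth entry0 L j)).1 = (ce_tid (nth entry0 L k)).1 -> sched_lt j k = (j < k).
Proof.
have Hlt j' k' : j' < k' -> k' < size L ->
    (ce_tid (nth entry0 L j')).1 = (ce_tid (nth entry0 L k')).1 -> sched_lt j' k'.
  move=> Hjk Hk Hs; have := B_proc Hjk Hk; rewrite /of_proc Hs eqxx => /(_ isT).
  have := B_le (ltn_trans Hjk Hk); rewrite /sched_lt /sched_key /=.
  by case: (is_writer _); case: (is_writer _) => ? ?; apply/andP; split; try apply/implyP; lia.
move=> Hj Hk Hs; case: (ltngtP j k) => [Hjk|Hkj|->]; first exact: Hlt.
- apply/negP => Hjk; have := sched_lt_trans Hjk (Hlt _ _ Hkj Hj (esym Hs)).
  by rewrite sched_lt_irr.
- exact: sched_lt_irr.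
Qed.

Lemma count_serialize_prefix m p : m < size L ->
  (ce_tid (nth entry0 L (nth 0 schedule m))).1 = p ->
  count (of_proc p) (take m serialize) = count (of_proc p) (take (nth 0 schedule m) L).
Proof.
move=> Hm; set k := nth 0 schedule m => Hp.
have Hk : k < size L by apply: nth_schedule_lt.
rewrite take_serialize // count_map count_filter (permP perm_schedule).
rewrite (@eq_in_count _ _ (predI (preim (nth entry0 L) (of_proc p)) (gtn k))); last first.
  move=> j; rewrite mem_iota /= => Hj; case Ej: (of_proc p _) => //=.
  by apply: sched_lt_proc => //; move/eqP: Ej; rewrite Hp.
rewrite -count_filter (_ : filter (gtn k) (iota 0 (size L)) = iota 0 k).
  by rewrite -count_map map_nth_iota0 // ltnW.
exact: (filter_iota_ltn 0 (ltnW Hk)).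
Qed.

End Serialization.

(** * Traces *)

Lemma find_entry_cons e L t :
  find_entry (e :: L) t = if ce_tid e == t then Some e else find_entry L t.
Proof. by rewrite /find_entry /=; case: ifP. Qed.

Lemma wx_writer L x t : wx L x t -> t \in map ce_tid (filter is_writer L).
Proof.
rewrite /wx; elim: L => //= e L IH; rewrite find_entry_cons.
case: eqP => [<- Hx|_ /IH Ht]; last by case: (is_writer e); rewrite //= in_cons Ht orbT.
by rewrite (_ : is_writer e) ?mem_head //; move: Hx; rewrite /is_writer /writes_var; case: (ce_writes e).
Qed.

Lemma find_entry_perm L (σ : seq nat) t : uniq (map ce_tid L) ->
  perm_eq σ (iota 0 (size L)) -> find_entry (map (nth entry0 L) σ) t = find_entry L t.
Proof.
move=> Hu Hσ; rewrite /find_entry filter_map.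
set a := preim _ _.
have -> : filter a σ = filter a (iota 0 (size L)).
  apply: perm_small_eq; last exact: perm_filter.
  rewrite size_filter -count_map map_nth_iota0 // take_size.
  by rewrite -(count_map ce_tid (pred1 t)) count_uniq_mem //; case: (_ \in _).
by rewrite -filter_map map_nth_iota0 // take_size.
Qed.

Lemma pos_in_filter (a : pred entry) L t1 t2 : uniq (map ce_tid L) ->
  t1 \in map ce_tid (filter a L) -> t2 \in map ce_tid (filter a L) ->
  (pos_in (filter a L) t1 < pos_in (filter a L) t2) = (pos_in L t1 < pos_in L t2).
Proof.
have sub t L' : t \in map ce_tid (filter a L') -> t \in map ce_tid L'.
  elim: L' => //= e L' IH; case: (a e); rewrite //= in_cons; last by move/IH ->; rewrite orbT.
  by rewrite in_cons; case/orP=> [->|/IH ->]; rewrite ?orbT.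
have pos_cons e L' t : pos_in (e :: L') t = if ce_tid e == t then 0 else (pos_in L' t).+1 by [].
elim: L => // e L IH /andP[He Hu]; rewrite [filter _ _]/=.
case Ha: (a e); rewrite ?[map _ (_ :: _)]/= ?in_cons !pos_cons.
  case E1: (ce_tid e == t1); case E2: (ce_tid e == t2); rewrite // eq_sym E1 eq_sym E2 /=.
  by move=> H1 H2; rewrite !ltnS IH.
move=> H1 H2; have Hne t : t \in map ce_tid (filter a L) -> (ce_tid e == t) = false.
  by move=> /sub Ht; apply: contraNF He => /eqP ->.
by rewrite !Hne // ltnS IH.
Qed.

Lemma perm_tids_reindex L (σ : seq nat) : perm_eq σ (iota 0 (size L)) ->
  perm_eq (map ce_tid (map (nth entry0 L) σ)) (map ce_tid L).
Proof.
move=> Hσ; rewrite -[in X in perm_eq _ X](mkseq_nth entry0 L) /mkseq -!map_comp.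
exact: perm_map.
Qed.

Lemma trace_of_reindex s s' (σ : seq nat) :
  uniq (map ce_tid (st_log s)) -> perm_eq σ (iota 0 (size (st_log s))) ->
  st_log s' = map (nth entry0 (st_log s)) σ ->
  filter is_writer (st_log s') = filter is_writer (st_log s) ->
  trace_of s' = trace_of s.
Proof.
rewrite /trace_of; move: (st_log s) (st_log s') => L L' Hu Hσ EL' Hw.
have Hp : perm_eq (map ce_tid L') (map ce_tid L) by rewrite EL'; apply: perm_tids_reindex.
have Hu' : uniq (map ce_tid L') by rewrite (perm_uniq Hp).
have Hc : committed L' = committed L.
  by apply: functional_extensionality => t; rewrite /committed (perm_mem Hp).
have Hf : find_entry L' = find_entry L.
  by apply: functional_extensionality => t; rewrite EL' find_entry_perm.
have Hwx : wx L' = wx L by rewrite /wx Hf.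
have Hww : ww_of L' = ww_of L.
  do 3 apply: functional_extensionality => ?; rewrite /ww_of Hwx.
  case E1: wx; case E2: wx => //=.
  have W1 := wx_writer E1; have W2 := wx_writer E2.
  by rewrite -(pos_in_filter (a := is_writer) Hu') Hw // (pos_in_filter Hu).
by rewrite Hc /ev_of /po_of /wr_of /rw_of Hc Hf Hwx Hww.
Qed.

(** * Serializing SI logs *)

(* Under SI a writer may run on a stale snapshot; it can be moved to its commit
   point only if it produces the same outcome there. *)
Definition writers_serial P R (L : seq entry) := forall k, k < size L ->
  is_writer (nth entry0 L k) -> outcome_on P R (take k L) (nth entry0 L k).

Lemma serialize_serial P R L B : si_log P R L B -> writers_serial P R L ->
  si_log P R (serialize L B) id.
Proof.
move=> HL HW m; rewrite size_map size_schedule => Hm.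
have Hle := si_log_snapshot_le HL; have Hproc := si_log_snapshot_proc HL.
have Hk := nth_schedule_lt B Hm; set k := nth 0 (schedule L B) m in Hk *.
rewrite nth_serialize //; have [H1 H2 H3 _ _ H6 _] := HL k Hk.
split => //.
- by rewrite count_serialize_prefix.
- apply: outcome_on_writers (esym (writers_serialize_prefix Hle Hm)) _.
  by rewrite /serial_point; case: ifP => Hw; [exact: HW | exact: H6].
- by rewrite drop_oversize // size_take_min geq_minl.
Qed.

Lemma writers_serial_single_var P R L B : si_log P R L B -> all_tx P single_var_tx ->
  writers_serial P R L.
Proof.
move=> HL Hsv k Hk Hw; have := HL k Hk.
have := si_log_written HL Hk; set e := nth entry0 L k.
move=> Hwr [H1 H2 _ HBk _ Hout Hfresh].
have [x Hx] := single_var_accessed (Hsv _ _ H1 H2).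
have Hxw : x \in map fst (ce_writes e).
  move: Hw Hwr; rewrite /is_writer; case: (ce_writes e) => [|[y v] ws] //= _ Hwr.
  have : y \in written_vars (txn P (ce_tid e)) by rewrite -Hwr mem_head.
  by move/written_vars_accessed/Hx => /eqP <-; rewrite mem_head.
apply: outcome_on_eq Hout => y /Hx /eqP ->.
rewrite -[in RHS](cat_take_drop (B k) (take k L)) take_takel // filter_cat.
by rewrite (filter_writes_none Hxw Hfresh) cats0.
Qed.

Lemma si_log_writes_common P R L B x k : si_log P R L B -> all_tx P (writes_to x) ->
  k < size L -> writes_var (nth entry0 L k) x.
Proof.
move=> HL Hwx Hk; have [H1 H2 _ _ _ _ _] := HL k Hk.
by rewrite /writes_var (si_log_written HL Hk); apply/writes_to_written/Hwx.
Qed.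

Lemma writers_serial_common_write P R L B x : si_log P R L B -> all_tx P (writes_to x) ->
  writers_serial P R L.
Proof.
move=> HL Hwx k Hk _; have [_ _ _ HBk _ Hout Hfresh] := HL k Hk.
suff Ek : B k = k by rewrite Ek in Hout.
case: (ltngtP (B k) k) HBk => [Hlt _|//|-> //].
have Hj : B k < size (take k L) by rewrite size_takel // ltnW.
have Hwk := si_log_writes_common HL Hwx Hk.
have Hwj := si_log_writes_common HL Hwx (ltn_trans Hlt Hk).
move: Hfresh; rewrite (drop_nth entry0 Hj) nth_take //= => /andP[/allP /(_ x Hwk)].
by rewrite Hwj.
Qed.

Theorem corollary2 (P : program) :
  (all_tx P single_rw_instr \/
   all_tx P single_var_tx \/
   (exists x : var, all_tx P (writes_to x))) ->
  robust_SI P.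
Proof.
move=> Hclass T; split; last by case=> ls [s [[Hsi _] <-]]; exists ls, s.
case=> ls [s [Hsi <-]].
have [R [B [HL _ _]]] := si_state_steps (si_state_init P) Hsi.
have HW : writers_serial P R (st_log s).
  case: Hclass => [Ha|[Hb|[x Hc]]].
  - by apply: writers_serial_single_var HL _ => p i Hp Hi; apply/single_rw_instr_single_var/Ha.
  - exact: writers_serial_single_var HL Hb.
  - exact: writers_serial_common_write HL Hc.
have [ls' [s' [Hser Hlog]]] := serial_exec_of_log (serialize_serial HL HW).
exists ls', s'; split=> //; apply: (trace_of_reindex _ _ Hlog).
- exact: si_log_uniq_tids HL.
- exact: perm_schedule.
- by rewrite Hlog writers_serialize.
Qed.
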